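(* Let $\mathfrak{g}_1$ and $\mathfrak{g}_2$ be characteristically nilpotent Lie algebras which are both $S$-algebras. Then the product by generators $\mathfrak{g}_1 \underline{\times} \mathfrak{g}_2$ is also a characteristically nilpotent Lie algebra.
   Context: All Lie algebras are finite-dimensional, complex, nilpotent and nonabelian. For a Lie algebra $\mathfrak{g}$ write $C^1\mathfrak{g}=[\mathfrak{g},\mathfrak{g}]$, $C^{k+1}\mathfrak{g}=[\mathfrak{g},C^k\mathfrak{g}]$, and $Z(\mathfrak{g})$ for the center. A nilpotent Lie algebra $\mathfrak{g}$ is characteristically nilpotent if there is $m$ with $\mathfrak{g}^{[m]}=0$, where $\mathfrak{g}^{[1]}=\mathrm{Der}(\mathfrak{g})(\mathfrak{g})=\{f(Y): f\in \mathrm{Der}(\mathfrak{g}), Y\in\mathfrak{g}\}$ and $\mathfrak{g}^{[k]}=\mathrm{Der}(\mathfrak{g})(\mathfrak{g}^{[k-1]})$ (equivalently, $\mathrm{Der}(\mathfrak{g})$ is nilpotent). Product by generators: let $\mathfrak{g}_1,\mathfrak{g}_2$ have dimensions $m_1,m_2$, with bases $\{X_1,\dots,X_{m_1}\}$ of $\mathfrak{g}_1$ and $\{X'_1,\dots,X'_{m_2}\}$ of $\mathfrak{g}_2$ such that $X_1,\dots,X_{n_1}$ generate $\mathfrak{g}_1$ and $X_{n_1+1},\dots,X_{m_1}$ span $C^1\mathfrak{g}_1$, and similarly $X'_1,\dots,X'_{n_2}$ generate $\mathfrak{g}_2$ and the remaining $X'_j$ span $C^1\mathfrak{g}_2$.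 Then $\mathfrak{g}_1\underline{\times}\mathfrak{g}_2$ is the Lie algebra on the vector space $\mathfrak{g}_1\oplus\mathfrak{g}_2\oplus\mathfrak{g}_3$, $\mathfrak{g}_3=\langle Z_1,\dots,Z_{n_1n_2}\rangle$, whose brackets are those of $\mathfrak{g}_1$ on $\mathfrak{g}_1$, those of $\mathfrak{g}_2$ on $\mathfrak{g}_2$, $[X_i,X'_j]=Z_{(i-1)n_2+j}$ for $1\le i\le n_1$, $1\le j\le n_2$, $[X_i,X'_j]=0$ if $i>n_1$ or $j>n_2$, and $\mathfrak{g}_3$ central (this is the central extension of $\mathfrak{g}_1\oplus\mathfrak{g}_2$ by the 2-cocycle $\varphi(X_i,X'_j)=e_{(i-1)n_2+j}$ with values in $\mathbb{C}^{n_1n_2}$). For $i=1,2,3$ let $p_i$ be the projection of $\mathfrak{g}_1\underline{\times}\mathfrak{g}_2=\mathfrak{g}_1\oplus\mathfrak{g}_2\oplus\mathfrak{g}_3$ onto $\mathfrak{g}_i$, and for a derivation $D$ write $D_{ij}=p_iDp_j$. A nilpotent Lie algebra $\mathfrak{g}_1$ is an $S$-algebra if for every Lie algebra $\mathfrak{g}_2$ and every derivation $D$ of $\mathfrak{g}_1\underline{\times}\mathfrak{g}_2$ one has $D_{21}(\mathfrak{g}_1)\subset C^1\mathfrak{g}_2$. *)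

From HB Require Import structures.
From mathcomp Require Import all_boot all_order all_algebra.
From mathcomp Require Import complex reals.
Set Implicit Arguments. Unset Strict Implicit. Unset Printing Implicit Defensive.
Import GRing.Theory.
Local Open Scope ring_scope.

Notation CC R := (complex (Real.sort R)).

Section LieDefs.
Variable F : fieldType.

Definition is_lie n (br : 'rV[F]_n -> 'rV[F]_n -> 'rV[F]_n) : Prop :=
  [/\ (forall (a : F) x y z, br (a *: x + y) z = a *: br x z + br y z),
      (forall (a : F) x y z, br x (a *: y + z) = a *: br x y + br x z),
      (forall x, br x x = 0) &
      (forall x y z, br x (br y z) + br y (br z x) + br z (br x y) = 0)].

Definition inspan n (P : 'rV[F]_n -> Prop) (v : 'rV[F]_n) : Prop :=
  exists s : seq (F * 'rV[F]_n),
    (forall p, p \in s -> P p.2) /\ v = \sum_(p <- s) p.1 *: p.2.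

Fixpoint lcs n (br : 'rV[F]_n -> 'rV[F]_n -> 'rV[F]_n) (k : nat)
  : 'rV[F]_n -> Prop :=
  match k with
  | 0 => fun _ => True
  | k'.+1 => inspan (fun u => exists x y, lcs br k' y /\ u = br x y)
  end.

Definition nilpotent n (br : 'rV[F]_n -> 'rV[F]_n -> 'rV[F]_n) : Prop :=
  exists k, forall v, lcs br k v -> v = 0.

Definition nonabelian n (br : 'rV[F]_n -> 'rV[F]_n -> 'rV[F]_n) : Prop :=
  exists x y, br x y <> 0.

Definition is_der n (br : 'rV[F]_n -> 'rV[F]_n -> 'rV[F]_n) (D : 'M[F]_n) :=
  forall x y, br x y *m D = br (x *m D) y + br x (y *m D).

Fixpoint der_iter n (br : 'rV[F]_n -> 'rV[F]_n -> 'rV[F]_n) (k : nat)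
  : 'rV[F]_n -> Prop :=
  match k with
  | 0 => fun _ => True
  | k'.+1 => inspan (fun u => exists D y, [/\ is_der br D, der_iter br k' y &
                                               u = y *m D])
  end.

Definition char_nilpotent n (br : 'rV[F]_n -> 'rV[F]_n -> 'rV[F]_n) : Prop :=
  nilpotent br /\ exists m, forall v, der_iter br m v -> v = 0.

Definition nil_lie n (br : 'rV[F]_n -> 'rV[F]_n -> 'rV[F]_n) : Prop :=
  [/\ is_lie br, nilpotent br & nonabelian br].

Definition generates n (br : 'rV[F]_n -> 'rV[F]_n -> 'rV[F]_n)
  (P : 'rV[F]_n -> Prop) : Prop :=
  forall Q : 'rV[F]_n -> Prop,
    Q 0 -> (forall (a : F) x y, Q x -> Q y -> Q (a *: x + y)) ->
    (forall x y, Q x -> Q y -> Q (br x y)) ->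
    (forall x, P x -> Q x) -> forall x, Q x.

(* Adapted basis on F^(n1 + r1): the first n1 standard basis vectors
   generate g and the last r1 standard basis vectors span C^1 g. *)
Definition adapted n1 r1 (br : 'rV[F]_(n1 + r1) -> 'rV[F]_(n1 + r1) -> 'rV[F]_(n1 + r1)) :=
  generates br (fun u => exists i : 'I_n1, u = row_mx (delta_mx 0 i) 0) /\
  (forall v, lcs br 1 v <-> lsubmx v = 0).

(* Product by generators g1 x g2 on F^((n1+r1) + (n2+r2) + n1*n2):
   [X_i, X'_j] = Z_{(i-1) n2 + j} for generators, g3 central. *)
Definition prod_gen n1 r1 n2 r2
  (br1 : 'rV[F]_(n1 + r1) -> 'rV[F]_(n1 + r1) -> 'rV[F]_(n1 + r1))
  (br2 : 'rV[F]_(n2 + r2) -> 'rV[F]_(n2 + r2) -> 'rV[F]_(n2 + r2))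
  (v w : 'rV[F]_((n1 + r1) + (n2 + r2) + n1 * n2))
  : 'rV[F]_((n1 + r1) + (n2 + r2) + n1 * n2) :=
  let v1 : 'rV_(n1 + r1) := lsubmx (lsubmx v) in
  let v2 : 'rV_(n2 + r2) := rsubmx (lsubmx v) in
  let w1 : 'rV_(n1 + r1) := lsubmx (lsubmx w) in
  let w2 : 'rV_(n2 + r2) := rsubmx (lsubmx w) in
  row_mx (row_mx (br1 v1 w1) (br2 v2 w2))
    (mxvec ((lsubmx v1)^T *m (lsubmx w2) - (lsubmx w1)^T *m (lsubmx v2))).

(* S-algebra: for every (nilpotent nonabelian) g2 with an adapted basis and
   every derivation D of g1 x g2, p2 D p1 (g1) is contained in C^1 g2. *)
Definition S_algebra n1 r1
  (br1 : 'rV[F]_(n1 + r1) -> 'rV[F]_(n1 + r1) -> 'rV[F]_(n1 + r1)) : Prop :=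
  forall n2 r2 (br2 : 'rV[F]_(n2 + r2) -> 'rV[F]_(n2 + r2) -> 'rV[F]_(n2 + r2)),
    nil_lie br2 -> adapted br2 ->
    forall D : 'M[F]_((n1 + r1) + (n2 + r2) + n1 * n2),
      is_der (prod_gen br1 br2) D ->
      forall x : 'rV[F]_(n1 + r1),
        lcs br2 1 (rsubmx (lsubmx (row_mx (row_mx x 0) 0 *m D))).

End LieDefs.

From HB Require Import structures.
From mathcomp Require Import all_boot all_order all_algebra.
From mathcomp Require Import complex reals.
From mathcomp Require Import zify.

Set Implicit Arguments. Unset Strict Implicit. Unset Printing Implicit Defensive.
Import GRing.Theory.
Local Open Scope ring_scope.

(* Write g = g1 (+) g2 (+) g3 for the product by generators, with projections
   p_i and embeddings e_i; in the adapted bases, lsubmx takes the generator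
   coordinates and its kernel is C^1 g_i.  By the S-property of g1, and of g2
   transported along the swap g1 x g2 ~ g2 x g1, every derivation D maps g1
   into g1 + C^1 g2 + g3 and g2 into C^1 g1 + g2 + g3.  Hence D11 = p1 D e1
   and D22 = p2 D e2 are derivations of g1 and g2, D maps C^1 g_i into g_i,
   and on g3 = V1 (x) V2 (V_i the generator spaces) D acts modulo
   C^1 g1 + C^1 g2 by the Leibniz rule D11 (x) 1 + 1 (x) D22.  So if
   Der(g_i)^M(g_i) = 0, every product of 4M derivations of g vanishes:
   M factors act on the generator coordinates as D11 (+) D22 and push g into
   C^1 g1 + C^1 g2 + g3, 2M more kill the g3-component, filtered by total
   degree, and M more kill C^1 g1 + C^1 g2, on which D acts as D11 (+) D22. *)

Section Subspaces.
Variables (F : fieldType) (n : nat).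
Implicit Types (P Q : 'rV[F]_n -> Prop) (x y : 'rV[F]_n).

Definition subspace P := P 0 /\ forall (a : F) x y, P x -> P y -> P (a *: x + y).

Lemma subspaceD P x y : subspace P -> P x -> P y -> P (x + y).
Proof. by case=> _ PZD Px Py; rewrite -[x]scale1r; apply: PZD. Qed.

Lemma subspaceZ P a x : subspace P -> P x -> P (a *: x).
Proof. by case=> P0 PZD Px; rewrite -[a *: x]addr0; apply: PZD. Qed.

Lemma subspace_sum P I (r : seq I) (f : I -> 'rV[F]_n) :
  subspace P -> (forall i, P (f i)) -> P (\sum_(i <- r) f i).
Proof.
move=> sP Pf; elim: r => [|i r IHr]; first by rewrite big_nil; case: sP.
by rewrite big_cons; apply: subspaceD.
Qed.

Lemma subspace_eq0 : subspace (fun x => x = 0).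
Proof. by split=> // a x y -> ->; rewrite scaler0 addr0. Qed.

Lemma subspace_and P Q : subspace P -> subspace Q -> subspace (fun x => P x /\ Q x).
Proof.
move=> [P0 PZD] [Q0 QZD]; split=> // a x y [Px Qx] [Py Qy].
by split; [apply: PZD | apply: QZD].
Qed.

Lemma inspan_mem P x : P x -> inspan P x.
Proof.
move=> Px; exists [:: (1, x)]; split; last by rewrite big_seq1 scale1r.
by move=> p; rewrite inE => /eqP ->.
Qed.

Lemma inspan_subspace P : subspace (inspan P).
Proof.
split; first by exists [::]; rewrite big_nil.
move=> a x y [sx [Psx ->]] [sy [Psy ->]].
exists ([seq (a * p.1, p.2) | p <- sx] ++ sy); split.
  by move=> p; rewrite mem_cat => /orP [/mapP [q /Psx ? ->] | /Psy].
rewrite big_cat big_map scaler_sumr; congr (_ + _).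
by apply: eq_bigr => p _; rewrite scalerA.
Qed.

Lemma inspan_min P Q : subspace Q -> (forall x, P x -> Q x) ->
  forall x, inspan P x -> Q x.
Proof.
move=> [Q0 QZD] PQ x [s [Ps ->]]; elim: s Ps => [|p s IHs] Ps.
  by rewrite big_nil.
rewrite big_cons; apply: QZD; first by apply/PQ/Ps; rewrite inE eqxx.
by apply: IHs => q qs; apply: Ps; rewrite inE qs orbT.
Qed.

End Subspaces.

Lemma subspace_preim (F : fieldType) m n (f : 'rV[F]_m -> 'rV[F]_n)
    (P : 'rV[F]_n -> Prop) :
  linear f -> subspace P -> subspace (fun u => P (f u)).
Proof.
move=> lin_f [P0 PZD]; split=> [|a u v Pu Pv]; last by rewrite lin_f; apply: PZD.
by have := lin_f (-1) 0 0; rewrite !scaleN1r oppr0 addr0 addNr => ->.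
Qed.

Lemma lsubmx0 (F : fieldType) m k l : lsubmx (0 : 'M[F]_(m, k + l)) = 0.
Proof. exact: linear0. Qed.

Section LieSeries.
Variables (F : fieldType) (n : nat) (br : 'rV[F]_n -> 'rV[F]_n -> 'rV[F]_n).

Lemma lcs_subspace k : subspace (lcs br k).
Proof. by case: k => [|k] //; apply: inspan_subspace. Qed.

Lemma der_iter_subspace k : subspace (der_iter br k).
Proof. by case: k => [|k] //; apply: inspan_subspace. Qed.

Lemma lcs_mono k l v : (k <= l)%N -> lcs br l v -> lcs br k v.
Proof.
have lcsS j w : lcs br j.+1 w -> lcs br j w.
  elim: j w => [|j IHj] w //=; apply: inspan_min; first exact: inspan_subspace.
  by move=> _ [x [y [/IHj lcs_y ->]]]; apply: inspan_mem; exists x, y.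
move=> /subnK <-; elim: (l - k)%N v => [|d IHd] v //= lcs_v.
by apply/IHd/lcsS.
Qed.

Lemma der_iter_mono k l v : (k <= l)%N -> der_iter br l v -> der_iter br k v.
Proof.
have derS j w : der_iter br j.+1 w -> der_iter br j w.
  elim: j w => [|j IHj] w //=; apply: inspan_min; first exact: inspan_subspace.
  by move=> _ [D [y [der_D /IHj der_y ->]]]; apply: inspan_mem; exists D, y.
move=> /subnK <-; elim: (l - k)%N v => [|d IHd] v //= der_v.
by apply/IHd/derS.
Qed.

Lemma der_iter_step k D v :
  is_der br D -> der_iter br k v -> der_iter br k.+1 (v *m D).
Proof. by move=> der_D der_v; apply: inspan_mem; exists D, v. Qed.

Lemma der_iter_filtration (P : nat -> 'rV[F]_n -> Prop) k :
  (forall j, subspace (P j)) -> (forall v, der_iter br k v -> P 0%N v) ->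
  (forall D j v, is_der br D -> P j v -> P j.+1 (v *m D)) ->
  forall j v, der_iter br (k + j) v -> P j v.
Proof.
move=> sP P0 PS; elim=> [|j IHj] v; first by rewrite addn0; apply: P0.
rewrite addnS; apply: inspan_min => // _ [D [y [der_D /IHj Py ->]]].
exact: PS.
Qed.

Lemma is_der_conj m (br' : 'rV[F]_m -> 'rV[F]_m -> 'rV[F]_m)
    (A : 'M[F]_(m, n)) (B : 'M[F]_(n, m)) D :
  (forall u w : 'rV_m, br' u w *m A = br (u *m A) (w *m A)) ->
  (forall u w : 'rV_n, br u w *m B = br' (u *m B) (w *m B)) ->
  (forall u : 'rV_m, u *m A *m B = u) ->
  is_der br D -> is_der br' (A *m D *m B).
Proof.
move=> A_br B_br ABK der_D u w; rewrite !mulmxA A_br der_D mulmxDl !B_br.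
by rewrite !ABK.
Qed.

Hypothesis lie_br : is_lie br.

Lemma br0l y : br 0 y = 0.
Proof.
case: lie_br => linl _ _ _; have := linl 1 0 0 y.
by rewrite !scale1r !addr0 => br0yD; apply: (addrI (br 0 y)); rewrite addr0 -br0yD.
Qed.

Lemma br0r y : br y 0 = 0.
Proof.
case: lie_br => _ linr _ _; have := linr 1 y 0 0.
by rewrite !scale1r !addr0 => bry0D; apply: (addrI (br y 0)); rewrite addr0 -bry0D.
Qed.

End LieSeries.

Section Adapted.
Variables (F : fieldType) (m s : nat).
Variable br : 'rV[F]_(m + s) -> 'rV[F]_(m + s) -> 'rV[F]_(m + s).
Hypothesis adapted_br : adapted br.
Implicit Types (x y : 'rV[F]_(m + s)) (D : 'M[F]_(m + s)).

Lemma lsubmx_br x y : lsubmx (br x y) = 0.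
Proof. by case: adapted_br => _ C1E; apply/C1E/inspan_mem; exists x, y. Qed.

Lemma adapted_C1_ind (Q : 'rV[F]_(m + s) -> Prop) :
  subspace Q -> (forall x y, Q (br x y)) -> forall x, lsubmx x = 0 -> Q x.
Proof.
move=> sQ Qbr x; case: adapted_br => _ C1E /C1E.
by apply: inspan_min => // _ [y [z [_ ->]]].
Qed.

Lemma der_lsubmx0 D x : is_der br D -> lsubmx x = 0 -> lsubmx (x *m D) = 0.
Proof.
move=> der_D; move: x; apply: (adapted_C1_ind (Q := fun x => lsubmx (x *m D) = 0)).
  by apply: subspace_preim (subspace_eq0 _ _) => a u v; rewrite mulmxDl -scalemxAl linearP.
by move=> x y; rewrite der_D linearD /= !lsubmx_br addr0.
Qed.

Lemma der_lsubmx_eq D x y :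
  is_der br D -> lsubmx x = lsubmx y -> lsubmx (x *m D) = lsubmx (y *m D).
Proof.
move=> der_D eq_xy; apply/eqP; rewrite -subr_eq0 -linearB -mulmxBl /=.
by rewrite (der_lsubmx0 der_D) // linearB /= eq_xy subrr.
Qed.

End Adapted.

Section ProductByGenerators.
Variables (F : fieldType) (n1 r1 n2 r2 : nat).
Variable br1 : 'rV[F]_(n1 + r1) -> 'rV[F]_(n1 + r1) -> 'rV[F]_(n1 + r1).
Variable br2 : 'rV[F]_(n2 + r2) -> 'rV[F]_(n2 + r2) -> 'rV[F]_(n2 + r2).
Local Notation V := 'rV[F]_(n1 + r1 + (n2 + r2) + n1 * n2).
Local Notation br := (prod_gen br1 br2).
Implicit Types (v w : V) (x : 'rV[F]_(n1 + r1)) (y : 'rV[F]_(n2 + r2)).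
Implicit Types (z : 'rV[F]_(n1 * n2)).

Definition p1 v : 'rV[F]_(n1 + r1) := lsubmx (lsubmx v).
Definition p2 v : 'rV[F]_(n2 + r2) := rsubmx (lsubmx v).
Definition p3 v : 'rV[F]_(n1 * n2) := rsubmx v.
Definition e1 x : V := row_mx (row_mx x 0) 0.
Definition e2 y : V := row_mx (row_mx 0 y) 0.
Definition e3 z : V := row_mx 0 z.

Fact p1_is_linear : linear p1. Proof. by move=> a v w; rewrite /p1 !linearP. Qed.
Fact p2_is_linear : linear p2. Proof. by move=> a v w; rewrite /p2 !linearP. Qed.
Fact p3_is_linear : linear p3. Proof. by move=> a v w; rewrite /p3 !linearP. Qed.
Fact e1_is_linear : linear e1.
Proof. by move=> a x x'; rewrite /e1 !scale_row_mx !add_row_mx !scaler0 !addr0. Qed.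
Fact e2_is_linear : linear e2.
Proof. by move=> a y y'; rewrite /e2 !scale_row_mx !add_row_mx !scaler0 !addr0. Qed.
Fact e3_is_linear : linear e3.
Proof. by move=> a z z'; rewrite /e3 !scale_row_mx !add_row_mx !scaler0 !addr0. Qed.

HB.instance Definition _ := GRing.isLinear.Build F V _ *:%R p1 p1_is_linear.
HB.instance Definition _ := GRing.isLinear.Build F V _ *:%R p2 p2_is_linear.
HB.instance Definition _ := GRing.isLinear.Build F V _ *:%R p3 p3_is_linear.
HB.instance Definition _ := GRing.isLinear.Build F _ V *:%R e1 e1_is_linear.
HB.instance Definition _ := GRing.isLinear.Build F _ V *:%R e2 e2_is_linear.
HB.instance Definition _ := GRing.isLinear.Build F _ V *:%R e3 e3_is_linear.

Lemma p1e1 x : p1 (e1 x) = x. Proof. by rewrite /p1 /e1 !row_mxKl. Qed.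
Lemma p2e1 x : p2 (e1 x) = 0. Proof. by rewrite /p2 /e1 row_mxKl row_mxKr. Qed.
Lemma p3e1 x : p3 (e1 x) = 0. Proof. by rewrite /p3 /e1 row_mxKr. Qed.
Lemma p1e2 y : p1 (e2 y) = 0. Proof. by rewrite /p1 /e2 !row_mxKl. Qed.
Lemma p2e2 y : p2 (e2 y) = y. Proof. by rewrite /p2 /e2 row_mxKl row_mxKr. Qed.
Lemma p3e2 y : p3 (e2 y) = 0. Proof. by rewrite /p3 /e2 row_mxKr. Qed.
Lemma p1e3 z : p1 (e3 z) = 0. Proof. by rewrite /p1 /e3 row_mxKl linear0. Qed.
Lemma p2e3 z : p2 (e3 z) = 0. Proof. by rewrite /p2 /e3 row_mxKl linear0. Qed.
Lemma p3e3 z : p3 (e3 z) = z. Proof. by rewrite /p3 /e3 row_mxKr. Qed.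

Lemma prod_decomp v : v = e1 (p1 v) + e2 (p2 v) + e3 (p3 v).
Proof. by rewrite /e1 /e2 /e3 !add_row_mx !addr0 !add0r !hsubmxK. Qed.

Lemma prod_ext v w : p1 v = p1 w -> p2 v = p2 w -> p3 v = p3 w -> v = w.
Proof. by move=> eq1 eq2 eq3; rewrite [v]prod_decomp [w]prod_decomp eq1 eq2 eq3. Qed.

Lemma p1_br v w : p1 (br v w) = br1 (p1 v) (p1 w).
Proof. by rewrite /p1 /prod_gen !row_mxKl. Qed.

Lemma p2_br v w : p2 (br v w) = br2 (p2 v) (p2 w).
Proof. by rewrite /p2 /prod_gen row_mxKl row_mxKr. Qed.

Lemma p3_br v w : p3 (br v w) =
  mxvec ((lsubmx (p1 v))^T *m lsubmx (p2 w) - (lsubmx (p1 w))^T *m lsubmx (p2 v)).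
Proof. by rewrite /p3 /prod_gen row_mxKr. Qed.

Hypotheses (lie1 : is_lie br1) (lie2 : is_lie br2).
Hypotheses (adapted1 : adapted br1) (adapted2 : adapted br2).

Lemma br_e1e1 x x' : br (e1 x) (e1 x') = e1 (br1 x x').
Proof.
apply: prod_ext; rewrite ?p1_br ?p2_br ?p3_br ?p1e1 ?p2e1 ?p3e1 ?(br0l lie2) //.
by rewrite lsubmx0 !mulmx0 subrr linear0.
Qed.

Lemma br_e2e2 y y' : br (e2 y) (e2 y') = e2 (br2 y y').
Proof.
apply: prod_ext; rewrite ?p1_br ?p2_br ?p3_br ?p1e2 ?p2e2 ?p3e2 ?(br0l lie1) //.
by rewrite lsubmx0 trmx0 !mul0mx subrr linear0.
Qed.

Lemma br_e1e2 x y : br (e1 x) (e2 y) = e3 (mxvec ((lsubmx x)^T *m lsubmx y)).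
Proof.
apply: prod_ext; rewrite ?p1_br ?p2_br ?p3_br ?p1e1 ?p2e1 ?p1e2 ?p2e2 ?p1e3 ?p2e3 ?p3e3.
- exact: br0r.
- exact: br0l.
by rewrite lsubmx0 trmx0 mul0mx subr0.
Qed.

(* Under g3 ~ V1 (x) V2, mxvec ((lsubmx a)^T *m lsubmx b) is the tensor of the
   generator parts of a and b. *)
Definition tensor_filt k := inspan (fun z : 'rV[F]_(n1 * n2) => exists a b p q,
  [/\ der_iter br1 p a, der_iter br2 q b, (k <= p + q)%N
    & z = mxvec ((lsubmx a)^T *m lsubmx b)]).

Lemma tensor_filt_subspace k : subspace (tensor_filt k).
Proof. exact: inspan_subspace. Qed.

Lemma tensor_filt0 z : tensor_filt 0 z.
Proof.
have sT := tensor_filt_subspace 0.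
rewrite -[z]vec_mxK (matrix_sum_delta (vec_mx z)) linear_sum.
apply: subspace_sum => // i; rewrite linear_sum; apply: subspace_sum => // j.
rewrite linearZ; apply: subspaceZ => //; apply: inspan_mem.
exists (row_mx (delta_mx 0 i : 'rV[F]_n1) (0 : 'rV[F]_r1)),
       (row_mx (delta_mx 0 j : 'rV[F]_n2) (0 : 'rV[F]_r2)), 0%N, 0%N.
by split=> //; rewrite !row_mxKl trmx_delta mul_delta_mx.
Qed.

Definition gen_filt j v :=
  (exists2 a, der_iter br1 j a & lsubmx (p1 v) = lsubmx a) /\
  (exists2 b, der_iter br2 j b & lsubmx (p2 v) = lsubmx b).

Definition center_filt k v :=
  [/\ lsubmx (p1 v) = 0, lsubmx (p2 v) = 0 & tensor_filt k (p3 v)].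

Definition derived_filt i v :=
  [/\ der_iter br1 i (p1 v), der_iter br2 i (p2 v),
      lsubmx (p1 v) = 0, lsubmx (p2 v) = 0 & p3 v = 0].

Lemma gen_filt_subspace j : subspace (gen_filt j).
Proof.
have [A0 AZD] := der_iter_subspace br1 j; have [B0 BZD] := der_iter_subspace br2 j.
split=> [|c v w [[a Aa va] [b Bb vb]] [[a' Aa' wa'] [b' Bb' wb']]].
  by split; exists 0; rewrite // !linear0 ?lsubmx0.
split; [exists (c *: a + a') | exists (c *: b + b')].
- exact: AZD.
- by rewrite !linearP /= va wa'.
- exact: BZD.
- by rewrite !linearP /= vb wb'.
Qed.

Lemma center_filt_subspace k : subspace (center_filt k).
Proof.
have [T0 TZD] := tensor_filt_subspace k.
split; first by split; rewrite !linear0 ?lsubmx0.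
move=> c v w [p1v p2v p3v] [p1w p2w p3w].
by split; rewrite !linearP /= ?p1v ?p2v ?p1w ?p2w ?scaler0 ?addr0 //; apply: TZD.
Qed.

Lemma derived_filt_subspace i : subspace (derived_filt i).
Proof.
have [A0 AZD] := der_iter_subspace br1 i; have [B0 BZD] := der_iter_subspace br2 i.
split; first by split; rewrite !linear0 ?lsubmx0.
move=> c v w [A_v B_v p1v p2v p3v] [A_w B_w p1w p2w p3w].
split; rewrite !linearP /= ?p1v ?p2v ?p3v ?p1w ?p2w ?p3w ?scaler0 ?addr0 //.
- exact: AZD.
- exact: BZD.
Qed.

Section Derivation.
Variable D : 'M[F]_(n1 + r1 + (n2 + r2) + n1 * n2).
Hypothesis der_D : is_der br D.
Hypothesis D12_C1 : forall x, lsubmx (p2 (e1 x *m D)) = 0.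
Hypothesis D21_C1 : forall y, lsubmx (p1 (e2 y *m D)) = 0.

Definition D11 := lin1_mx e1 *m D *m lin1_mx p1.
Definition D22 := lin1_mx e2 *m D *m lin1_mx p2.

Lemma D11E x : x *m D11 = p1 (e1 x *m D).
Proof. by rewrite /D11 !mulmxA !mul_rV_lin1. Qed.

Lemma D22E y : y *m D22 = p2 (e2 y *m D).
Proof. by rewrite /D22 !mulmxA !mul_rV_lin1. Qed.

Lemma D11_der : is_der br1 D11.
Proof. by move=> x x'; rewrite !D11E -br_e1e1 der_D linearD /= !p1_br !p1e1. Qed.

Lemma D22_der : is_der br2 D22.
Proof. by move=> y y'; rewrite !D22E -br_e2e2 der_D linearD /= !p2_br !p2e2. Qed.

Lemma der_e1_C1 x : lsubmx x = 0 -> p2 (e1 x *m D) = 0 /\ p3 (e1 x *m D) = 0.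
Proof.
move: x; apply: (adapted_C1_ind adapted1
  (Q := fun x => p2 (e1 x *m D) = 0 /\ p3 (e1 x *m D) = 0)).
  by apply: subspace_and; apply: subspace_preim (subspace_eq0 _ _) => a x x';
     rewrite linearP mulmxDl -scalemxAl linearP.
move=> x x'; rewrite -br_e1e1 der_D !linearD /= !p2_br !p3_br !p2e1 !p1e1.
by rewrite (br0l lie2) (br0r lie2) addr0 !D12_C1 lsubmx0 !mulmx0 !subr0 linear0 addr0.
Qed.

Lemma der_e2_C1 y : lsubmx y = 0 -> p1 (e2 y *m D) = 0 /\ p3 (e2 y *m D) = 0.
Proof.
move: y; apply: (adapted_C1_ind adapted2
  (Q := fun y => p1 (e2 y *m D) = 0 /\ p3 (e2 y *m D) = 0)).
  by apply: subspace_and; apply: subspace_preim (subspace_eq0 _ _) => a y y';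
     rewrite linearP mulmxDl -scalemxAl linearP.
move=> y y'; rewrite -br_e2e2 der_D !linearD /= !p1_br !p3_br !p1e2 !p2e2.
by rewrite (br0l lie1) (br0r lie1) addr0 !D21_C1 lsubmx0 trmx0 !mul0mx !subrr linear0 addr0.
Qed.

Lemma der_e3_tensor_filt k z : tensor_filt k z ->
  [/\ lsubmx (p1 (e3 z *m D)) = 0, lsubmx (p2 (e3 z *m D)) = 0
    & tensor_filt k.+1 (p3 (e3 z *m D))].
Proof.
have [T0 TZD] := tensor_filt_subspace k.+1.
move: z; apply: inspan_min => [|_ [a [b [p [q [der_a der_b pq ->]]]]]].
  split=> [|c z z' [z1 z2 z3] [z1' z2' z3']].
    by rewrite linear0 mul0mx !linear0 ?lsubmx0.
  rewrite linearP mulmxDl -scalemxAl !linearP /= z1 z2 z1' z2' !scaler0 !addr0.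
  by split=> //; apply: TZD.
rewrite -br_e1e2 der_D !linearD /= !p1_br !p2_br !p3_br !lsubmx_br // !addr0.
rewrite !p1e1 !p2e2 !p1e2 !p2e1 !lsubmx0 trmx0 mul0mx mulmx0 !subr0 -D11E -D22E.
split=> //; apply: subspaceD (tensor_filt_subspace _) _ _; apply: inspan_mem.
  by exists (a *m D11), b, p.+1, q; split=> //; apply: der_iter_step D11_der der_a.
exists a, (b *m D22), p, q.+1; rewrite addnS; split=> //.
exact: der_iter_step D22_der der_b.
Qed.

Lemma lsubmx_p1_der v : lsubmx (p1 (v *m D)) = lsubmx (p1 v *m D11).
Proof.
have [e3D_C1 _ _] := der_e3_tensor_filt (tensor_filt0 (p3 v)).
by rewrite {1}[v]prod_decomp !mulmxDl !linearD /= D21_C1 e3D_C1 !addr0 D11E.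
Qed.

Lemma lsubmx_p2_der v : lsubmx (p2 (v *m D)) = lsubmx (p2 v *m D22).
Proof.
have [_ e3D_C1 _] := der_e3_tensor_filt (tensor_filt0 (p3 v)).
by rewrite {1}[v]prod_decomp !mulmxDl !linearD /= D12_C1 e3D_C1 add0r addr0 D22E.
Qed.

Lemma gen_filt_der j v : gen_filt j v -> gen_filt j.+1 (v *m D).
Proof.
move=> [[a der_a va] [b der_b vb]]; split.
  exists (a *m D11); first exact: der_iter_step D11_der der_a.
  by rewrite lsubmx_p1_der (der_lsubmx_eq adapted1 D11_der va).
exists (b *m D22); first exact: der_iter_step D22_der der_b.
by rewrite lsubmx_p2_der (der_lsubmx_eq adapted2 D22_der vb).
Qed.

Lemma center_filt_der k v : center_filt k v -> center_filt k.+1 (v *m D).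
Proof.
move=> [p1v p2v p3v]; split.
- by rewrite lsubmx_p1_der (der_lsubmx0 adapted1 D11_der p1v).
- by rewrite lsubmx_p2_der (der_lsubmx0 adapted2 D22_der p2v).
have [_ _ p3e3D] := der_e3_tensor_filt p3v.
rewrite {1}[v]prod_decomp !mulmxDl !linearD /=.
by rewrite (der_e1_C1 p1v).2 (der_e2_C1 p2v).2 !add0r.
Qed.

Lemma derived_filt_der i v : derived_filt i v -> derived_filt i.+1 (v *m D).
Proof.
move=> [der1 der2 p1v p2v p3v].
have vD : v *m D = e1 (p1 v) *m D + e2 (p2 v) *m D.
  by rewrite {1}[v]prod_decomp p3v linear0 addr0 mulmxDl.
have p1vD : p1 (v *m D) = p1 v *m D11.
  by rewrite vD linearD /= (der_e2_C1 p2v).1 addr0 D11E.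
have p2vD : p2 (v *m D) = p2 v *m D22.
  by rewrite vD linearD /= (der_e1_C1 p1v).1 add0r D22E.
rewrite /derived_filt p1vD p2vD; split.
- exact: der_iter_step D11_der der1.
- exact: der_iter_step D22_der der2.
- exact: (der_lsubmx0 adapted1 D11_der p1v).
- exact: (der_lsubmx0 adapted2 D22_der p2v).
by rewrite vD linearD /= (der_e1_C1 p1v).2 (der_e2_C1 p2v).2 addr0.
Qed.

End Derivation.

Lemma lcs_prod k v : lcs br k v ->
  [/\ lcs br1 k (p1 v), lcs br2 k (p2 v) & (1 < k)%N -> p3 v = 0].
Proof.
elim: k v => [|k IHk] //=.
have [A0 AZD] := lcs_subspace br1 k.+1; have [B0 BZD] := lcs_subspace br2 k.+1.
apply: inspan_min => [|_ [x [y [/IHk [lcs1 lcs2 _] ->]]]].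
  split=> [|c w w' [A_w B_w p3w] [A_w' B_w' p3w']]; first by rewrite !linear0.
  rewrite !linearP /=; split; [exact: AZD | exact: BZD | move=> k_gt1].
  by rewrite p3w // p3w' // scaler0 addr0.
rewrite p1_br p2_br p3_br; split.
- by apply: inspan_mem; exists (p1 x), (p1 y).
- by apply: inspan_mem; exists (p2 x), (p2 y).
move=> k_gt1; have k_gt0 : (1 <= k)%N by lia.
have [_ C1E1] := adapted1; have [_ C1E2] := adapted2.
rewrite ((C1E1 _).1 (lcs_mono k_gt0 lcs1)) ((C1E2 _).1 (lcs_mono k_gt0 lcs2)).
by rewrite mulmx0 trmx0 mul0mx subr0 linear0.
Qed.

Lemma prod_nilpotent : nilpotent br1 -> nilpotent br2 -> nilpotent br.
Proof.
move=> [k1 nil1] [k2 nil2]; exists (maxn k1 k2).+2 => v /lcs_prod [lcs1 lcs2 p3v].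
have le_k1 : (k1 <= (maxn k1 k2).+2)%N by lia.
have le_k2 : (k2 <= (maxn k1 k2).+2)%N by lia.
rewrite [v]prod_decomp (nil1 _ (lcs_mono le_k1 lcs1)) (nil2 _ (lcs_mono le_k2 lcs2)).
by rewrite p3v // !linear0 !addr0.
Qed.

Section CharacteristicNilpotency.
Variable M : nat.
Hypothesis der_iter1_eq0 : forall a, der_iter br1 M a -> a = 0.
Hypothesis der_iter2_eq0 : forall b, der_iter br2 M b -> b = 0.
Hypothesis D12_C1 : forall D, is_der br D -> forall x, lsubmx (p2 (e1 x *m D)) = 0.
Hypothesis D21_C1 : forall D, is_der br D -> forall y, lsubmx (p1 (e2 y *m D)) = 0.

Lemma tensor_filt_top z : tensor_filt (M + M) z -> z = 0.
Proof.
apply: inspan_min (subspace_eq0 _ _) _ z => _ [a [b [p [q [der_a der_b pq ->]]]]].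
have [Mp | pM] := leqP M p.
  by rewrite (der_iter1_eq0 (der_iter_mono Mp der_a)) lsubmx0 trmx0 mul0mx linear0.
have Mq : (M <= q)%N by lia.
by rewrite (der_iter2_eq0 (der_iter_mono Mq der_b)) lsubmx0 mulmx0 linear0.
Qed.

Lemma der_iter_gen_filt j v : der_iter br j v -> gen_filt j v.
Proof.
apply: (der_iter_filtration (k := 0)) => [k | w _ | D k w der_D].
- exact: gen_filt_subspace.
- by split; [exists (p1 w) | exists (p2 w)].
- exact: (gen_filt_der der_D (D12_C1 der_D) (D21_C1 der_D)).
Qed.

Lemma der_iter_center_filt k v : der_iter br (M + k) v -> center_filt k v.
Proof.
apply: der_iter_filtration => [i | w | D i w der_D].
- exact: center_filt_subspace.
- move=> /der_iter_gen_filt [[a /der_iter1_eq0 -> p1w] [b /der_iter2_eq0 -> p2w]].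
  by split; [rewrite p1w lsubmx0 | rewrite p2w lsubmx0 | apply: tensor_filt0].
- exact: (center_filt_der der_D (D12_C1 der_D) (D21_C1 der_D)).
Qed.

Lemma der_iter_derived_filt i v : der_iter br (M + (M + M) + i) v -> derived_filt i v.
Proof.
apply: der_iter_filtration => [k | w | D k w der_D].
- exact: derived_filt_subspace.
- by move=> /der_iter_center_filt [p1w p2w /tensor_filt_top p3w]; split.
- exact: (derived_filt_der der_D (D12_C1 der_D) (D21_C1 der_D)).
Qed.

Lemma der_iter_prod_eq0 v : der_iter br (M + (M + M) + M) v -> v = 0.
Proof.
move=> /der_iter_derived_filt [der1 der2 _ _ p3v].
by rewrite [v]prod_decomp (der_iter1_eq0 der1) (der_iter2_eq0 der2) p3v !linear0 !addr0.
Qed.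

End CharacteristicNilpotency.

End ProductByGenerators.

Section Swap.
Variables (F : fieldType) (n1 r1 n2 r2 : nat).
Variable br1 : 'rV[F]_(n1 + r1) -> 'rV[F]_(n1 + r1) -> 'rV[F]_(n1 + r1).
Variable br2 : 'rV[F]_(n2 + r2) -> 'rV[F]_(n2 + r2) -> 'rV[F]_(n2 + r2).
Local Notation V12 := 'rV[F]_(n1 + r1 + (n2 + r2) + n1 * n2).
Local Notation V21 := 'rV[F]_(n2 + r2 + (n1 + r1) + n2 * n1).
Implicit Types (v w : V12).

(* The sign on g3 comes from [X_i, X'_j] = - [X'_j, X_i]. *)
Definition prod_swap v : V21 :=
  row_mx (row_mx (p2 v) (p1 v)) (- mxvec (vec_mx (p3 v))^T).

Fact prod_swap_is_linear : linear prod_swap.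
Proof.
by move=> a v w; rewrite /prod_swap !linearP /= !scale_row_mx !add_row_mx.
Qed.

HB.instance Definition _ :=
  GRing.isLinear.Build F V12 V21 *:%R prod_swap prod_swap_is_linear.

Definition swap_mx := lin1_mx prod_swap.

Lemma mul_swap_mx v : v *m swap_mx = prod_swap v.
Proof. exact: mul_rV_lin1. Qed.

Lemma p1_swap v : p1 (prod_swap v) = p2 v.
Proof. by rewrite /prod_swap /p1 !row_mxKl. Qed.

Lemma p2_swap v : p2 (prod_swap v) = p1 v.
Proof. by rewrite /prod_swap /p2 row_mxKl row_mxKr. Qed.

Lemma p3_swap v : p3 (prod_swap v) = - mxvec (vec_mx (p3 v))^T.
Proof. by rewrite /prod_swap /p3 row_mxKr. Qed.

Lemma prod_swap_br v w :
  prod_swap (prod_gen br1 br2 v w) = prod_gen br2 br1 (prod_swap v) (prod_swap w).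
Proof.
apply: prod_ext; rewrite ?(p1_swap, p2_swap, p3_swap, p1_br, p2_br, p3_br) //.
by rewrite (@mxvecK F) linearB /= !trmx_mul !trmxK -linearN /= opprB.
Qed.

Lemma prod_swap_e1 x : prod_swap (e1 n2 r2 x) = e2 n2 r2 x.
Proof.
apply: prod_ext; rewrite ?(p1_swap, p2_swap, p3_swap, p1e1, p2e1, p3e1, p1e2, p2e2, p3e2) //.
by rewrite linear0 trmx0 linear0 oppr0.
Qed.

End Swap.

Lemma prod_swapK (F : fieldType) n1 r1 n2 r2 (v : 'rV[F]_(n1 + r1 + (n2 + r2) + n1 * n2)) :
  prod_swap (prod_swap v) = v.
Proof.
apply: prod_ext; rewrite ?(p1_swap, p2_swap, p3_swap) //.
by rewrite !linearN /= (@mxvecK F) !linearN /= trmxK opprK vec_mxK.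
Qed.

Lemma S_algebra_D12_C1 (F : fieldType) n1 r1 n2 r2
    (br1 : 'rV[F]_(n1 + r1) -> 'rV[F]_(n1 + r1) -> 'rV[F]_(n1 + r1))
    (br2 : 'rV[F]_(n2 + r2) -> 'rV[F]_(n2 + r2) -> 'rV[F]_(n2 + r2)) D :
  nil_lie br2 -> adapted br2 -> S_algebra br1 -> is_der (prod_gen br1 br2) D ->
  forall x, lsubmx (p2 (e1 n2 r2 x *m D)) = 0.
Proof.
move=> nil2 adapted2 S1 der_D x; apply/(proj2 adapted2).
exact: (S1 _ _ br2 nil2 adapted2 D der_D x).
Qed.

Lemma S_algebra_D21_C1 (F : fieldType) n1 r1 n2 r2
    (br1 : 'rV[F]_(n1 + r1) -> 'rV[F]_(n1 + r1) -> 'rV[F]_(n1 + r1))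
    (br2 : 'rV[F]_(n2 + r2) -> 'rV[F]_(n2 + r2) -> 'rV[F]_(n2 + r2)) D :
  nil_lie br1 -> adapted br1 -> S_algebra br2 -> is_der (prod_gen br1 br2) D ->
  forall y, lsubmx (p1 (e2 n1 r1 y *m D)) = 0.
Proof.
move=> nil1 adapted1 S2 der_D y.
have der_D' : is_der (prod_gen br2 br1) (swap_mx F n2 r2 n1 r1 *m D *m swap_mx F n1 r1 n2 r2).
  apply: is_der_conj der_D => [u w | u w | u]; rewrite !mul_swap_mx.
  - exact: prod_swap_br.
  - exact: prod_swap_br.
  - exact: prod_swapK.
have := S_algebra_D12_C1 nil1 adapted1 S2 der_D' y.
by rewrite !mulmxA !mul_swap_mx prod_swap_e1 p2_swap.
Qed.

Theorem mainTheorem1 (R : realType) (n1 r1 n2 r2 : nat)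
  (br1 : 'rV[CC R]_(n1 + r1) -> 'rV[CC R]_(n1 + r1) -> 'rV[CC R]_(n1 + r1))
  (br2 : 'rV[CC R]_(n2 + r2) -> 'rV[CC R]_(n2 + r2) -> 'rV[CC R]_(n2 + r2)) :
  nil_lie br1 -> adapted br1 -> char_nilpotent br1 -> S_algebra br1 ->
  nil_lie br2 -> adapted br2 -> char_nilpotent br2 -> S_algebra br2 ->
  char_nilpotent (prod_gen br1 br2).
Proof.
move=> nl1 ad1 [_ [m1 der1]] S1 nl2 ad2 [_ [m2 der2]] S2.
have [[lie1 nil1 _] [lie2 nil2 _]] := (nl1, nl2).
split; first exact: prod_nilpotent.
pose M := maxn m1 m2; exists (M + (M + M) + M).
apply: (der_iter_prod_eq0 lie1 lie2 ad1 ad2 (M := M)).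
- by move=> a /(der_iter_mono (leq_maxl m1 m2)) /der1.
- by move=> b /(der_iter_mono (leq_maxr m1 m2)) /der2.
- by move=> D; apply: S_algebra_D12_C1.
- by move=> D; apply: S_algebra_D21_C1.
Qed.
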